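(* Let $\mathcal{D}$ be a dyadic grid and $f$ a positive function on $\mathbb{D}$. The following are equivalent: (1) $f$ is almost constant on dyadic $3/4$-top halves, i.e. there is $C\ge1$ with $f(z)\le Cf(\zeta)$ for all $z,\zeta\in T_{3/4}(I)$ and all $I\in\mathcal{D}$; (2) there is a constant $L$ such that $|\log f(z)-\log f(\zeta)|\le L(1+\beta_{\mathcal{D}}(z,\zeta))$ for all $z,\zeta\in\mathbb{D}$.
   Context: $\mathbb{D}$ is the open unit disc, $\mathbb{T}$ the unit circle, $|I|$ normalized arc length ($|\mathbb{T}|=1$). For $0<\rho\le1$, $T_\rho(I)=\{z\in\mathbb{D}: 1-\rho<\frac{1-|z|}{|I|}\le1,\ z/|z|\in I\}$ (with $z=0$ regarded as belonging to $T_\rho(\mathbb{T})$), and $T(I)=T_{1/2}(I)$. A dyadic grid of $\mathbb{T}$ is a collection $\mathcal{D}$ of half-open arcs with $\mathbb{T}\in\mathcal{D}$ such that for every $I\in\mathcal{D}$ the arcs of $\mathcal{D}$ of length $|I|$ partition $\mathbb{T}$ and $I=I_1\cup I_2$ with $I_1,I_2\in\mathcal{D}$ of equal length; the sets $T(I)$, $I\in\mathcal{D}$, then tile $\mathbb{D}$. For $z\in\mathbb{D}$ let $\mathcal{I}_z$ be the unique arc of $\mathcal{D}$ with $z\in T(\mathcal{I}_z)$; for $I,J\in\mathcal{D}$ let $P_{\mathcal{D}}(I,J)$ be the smallest arc of $\mathcal{D}$ containing both. The dyadic hyperbolic distance is $\beta_{\mathcal{D}}(z,\zeta)=\log_2\frac{|P_{\mathcal{D}}(\mathcal{I}_z,\mathcal{I}_\zeta)|}{\min\{|\mathcal{I}_z|,|\mathcal{I}_\zeta|\}}$.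 *)

From Stdlib Require Import Reals Lra ClassicalEpsilon.
Open Scope R_scope.

(* Points of the complex plane, z = x + i y represented as (x, y). *)
Definition pt : Type := (R * R)%type.

Definition modulus (z : pt) : R := sqrt (fst z ^ 2 + snd z ^ 2).

Definition in_disc (z : pt) : Prop := modulus z < 1.

Definition normalize (z : pt) : pt := (fst z / modulus z, snd z / modulus z).

Definition circ (t : R) : pt := (cos (2 * PI * t), sin (2 * PI * t)).

Definition on_circle (w : pt) : Prop := exists t, w = circ t.

(* A half-open arc of T, with normalized length arc_len (|T| = 1):
   the set { e^{2 pi i t} : arc_start <= t < arc_start + arc_len }. *)
Record arc : Type := mkarc { arc_start : R; arc_len : R }.

Definition valid_arc (I : arc) : Prop := 0 < arc_len I <= 1.

Definition arc_set (I : arc) (w : pt) : Prop :=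
  exists t, arc_start I <= t < arc_start I + arc_len I /\ w = circ t.

Definition arc_sub (I J : arc) : Prop := forall w, arc_set I w -> arc_set J w.

Definition arc_eq (I J : arc) : Prop := forall w, arc_set I w <-> arc_set J w.

(* T_rho(I) = { z in D : 1 - rho < (1-|z|)/|I| <= 1, z/|z| in I },
   with z = 0 regarded as belonging to T_rho(T) (for z = 0 the ratio
   condition forces |I| = 1, i.e. I = T). *)
Definition in_T (rho : R) (I : arc) (z : pt) : Prop :=
  in_disc z /\
  1 - rho < (1 - modulus z) / arc_len I <= 1 /\
  (z = (0, 0) \/ arc_set I (normalize z)).

Definition dyadic_grid (D : arc -> Prop) : Prop :=
  (forall I, D I -> valid_arc I) /\
  (exists a, D (mkarc a 1)) /\
  (forall I, D I ->
     (forall w, on_circle w -> exists J, D J /\ arc_len J = arc_len I /\ arc_set J w) /\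
     (forall J K, D J -> D K -> arc_len J = arc_len I -> arc_len K = arc_len I ->
        (exists w, arc_set J w /\ arc_set K w) -> arc_eq J K)) /\
  (forall I, D I -> exists I1 I2, D I1 /\ D I2 /\
     arc_len I1 = arc_len I / 2 /\ arc_len I2 = arc_len I / 2 /\
     (forall w, arc_set I w <-> arc_set I1 w \/ arc_set I2 w)) /\
  (forall I, D I -> exists n : nat, arc_len I = (/ 2) ^ n).

Definition arc_inhabited : inhabited arc := inhabits (mkarc 0 1).

(* I_z : the (unique up to parametrization) arc of D with z in T(I_z) *)
Definition Iz (D : arc -> Prop) (z : pt) : arc :=
  epsilon arc_inhabited (fun I => D I /\ in_T (1/2) I z).

Definition PD (D : arc -> Prop) (I J : arc) : arc :=
  epsilon arc_inhabited (fun P => D P /\ arc_sub I P /\ arc_sub J P /\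
     forall Q, D Q -> arc_sub I Q -> arc_sub J Q -> arc_sub P Q).

Definition log2 (x : R) : R := ln x / ln 2.

Definition betaD (D : arc -> Prop) (z zeta : pt) : R :=
  log2 (arc_len (PD D (Iz D z) (Iz D zeta)) /
        Rmin (arc_len (Iz D z)) (arc_len (Iz D zeta))).

(* The dyadic arcs containing a given arc form a chain I_z = J_0 < J_1 < ... in
   which each arc is half of the next.  A point of T(J_k) and the "centre" of
   T(J_(k+1)) both lie in T_{3/4}(J_(k+1)), so under (1) log f changes by at
   most log C per step; going up from I_z and from I_zeta to P(I_z, I_zeta)
   takes at most beta(z, zeta) steps on each side, which gives (2).
   Conversely, if z and zeta lie in T_{3/4}(I) then I_z and I_zeta are I or one
   of its halves, so beta(z, zeta) <= 1 and (2) bounds log(f z / f zeta). *)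

From Stdlib Require Import Reals Lra Lia ZArith Classical ClassicalEpsilon.
Open Scope R_scope.

Lemma circ_eq_diff_Z (t s : R) : circ t = circ s -> exists k : Z, t - s = IZR k.
Proof.
  unfold circ; intros H. injection H as Hc Hs.
  assert (Hd : cos (2 * PI * (t - s)) = 1).
  { replace (2 * PI * (t - s)) with (2 * PI * t - 2 * PI * s) by ring.
    rewrite cos_minus, Hc, Hs.
    pose proof (sin2_cos2 (2 * PI * s)) as E. unfold Rsqr in E. lra. }
  replace (2 * PI * (t - s)) with (2 * (PI * (t - s))) in Hd by ring.
  rewrite cos_2a_sin in Hd.
  assert (Hs0 : sin (PI * (t - s)) = 0) by nra.
  destruct (sin_eq_0_0 _ Hs0) as [k Hk]. exists k.
  pose proof PI_RGT_0.
  apply Rmult_eq_reg_l with PI; [|lra]. rewrite Hk. ring.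
Qed.

Lemma circ_add_INR (t : R) (n : nat) : circ (t + INR n) = circ t.
Proof.
  unfold circ.
  replace (2 * PI * (t + INR n)) with (2 * PI * t + 2 * INR n * PI) by ring.
  now rewrite cos_period, sin_period.
Qed.

Lemma circ_add_IZR (t : R) (k : Z) : circ (t + IZR k) = circ t.
Proof.
  destruct (Z_le_gt_dec 0 k) as [Hk|Hk].
  - rewrite <- (Z2Nat.id k Hk), <- INR_IZR_INZ. apply circ_add_INR.
  - assert (E : k = (- Z.of_nat (Z.to_nat (- k)))%Z) by lia.
    rewrite E, opp_IZR, <- INR_IZR_INZ.
    rewrite <- (circ_add_INR (t + - INR (Z.to_nat (- k))) (Z.to_nat (- k))).
    f_equal; ring.
Qed.

Lemma arc_set_full (a : R) (w : pt) : on_circle w -> arc_set (mkarc a 1) w.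
Proof.
  intros [t ->]. destruct (archimed (t - a)) as [H1 H2].
  exists (t + IZR (1 - up (t - a))%Z). cbn [arc_start arc_len]. split.
  - rewrite minus_IZR. simpl. lra.
  - symmetry. apply circ_add_IZR.
Qed.

Lemma arc_set_start (I : arc) : 0 < arc_len I -> arc_set I (circ (arc_start I)).
Proof. intros H. exists (arc_start I). split; [lra | reflexivity]. Qed.

Lemma arc_set_on_circle (I : arc) (w : pt) : arc_set I w -> on_circle w.
Proof. intros [t [_ ->]]. exists t; reflexivity. Qed.

Lemma arc_sub_len_le (J K : arc) :
  valid_arc J -> arc_sub J K -> arc_len J <= arc_len K.
Proof.
  intros [HJ HJ1] Hsub.
  destruct (Rle_or_lt (arc_len J) (arc_len K)) as [h|h]; [exact h|exfalso].
  destruct (Hsub _ (arc_set_start J HJ)) as [s0 [Hs0 E0]].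
  destruct (circ_eq_diff_Z _ _ E0) as [n0 Hn0].
  (* [t] lies in J and is congruent to the right end of K, which K omits. *)
  set (t := arc_start J + (arc_start K + arc_len K - s0)).
  assert (Ht : arc_set J (circ t)) by (exists t; split; [unfold t; lra | reflexivity]).
  destruct (Hsub _ Ht) as [s [Hs E]].
  destruct (circ_eq_diff_Z _ _ E) as [n1 Hn1].
  assert (Hlo : 0 < IZR (n1 - n0)) by (rewrite minus_IZR; unfold t in Hn1; lra).
  assert (Hhi : IZR (n1 - n0) < 1) by (rewrite minus_IZR; unfold t in Hn1; lra).
  apply lt_IZR in Hlo. apply lt_IZR in Hhi. lia.
Qed.

Lemma arc_sub_full (I K : arc) : arc_len K = 1 -> arc_sub I K.
Proof.
  intros H1 w Hw. destruct K as [a l]. simpl in H1. subst l.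
  apply arc_set_full. eapply arc_set_on_circle; eauto.
Qed.

Lemma unit_circle_polar (x y : R) : x ^ 2 + y ^ 2 = 1 -> exists t, (x, y) = circ t.
Proof.
  intros H.
  assert (Hx : -1 <= x <= 1) by nra.
  pose proof (cos_acos x Hx) as Hc. pose proof (sin_acos x Hx) as Hs.
  assert (Hsq : sqrt (1 - x²) = Rabs y).
  { replace (1 - x²) with (Rsqr y) by (unfold Rsqr; lra). apply sqrt_Rsqr_abs. }
  pose proof PI_RGT_0.
  destruct (Rle_or_lt 0 y) as [hy|hy].
  - exists (acos x / (2 * PI)). unfold circ.
    replace (2 * PI * (acos x / (2 * PI))) with (acos x) by (field; lra).
    rewrite Hc, Hs, Hsq, Rabs_pos_eq; auto.
  - exists (- acos x / (2 * PI)). unfold circ.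
    replace (2 * PI * (- acos x / (2 * PI))) with (- acos x) by (field; lra).
    rewrite cos_neg, sin_neg, Hc, Hs, Hsq, Rabs_left; auto. f_equal; ring.
Qed.

Lemma modulus_origin : modulus (0, 0) = 0.
Proof.
  unfold modulus; simpl.
  replace (0 * (0 * 1) + 0 * (0 * 1)) with 0 by ring. apply sqrt_0.
Qed.

Lemma modulus_pos (z : pt) : z <> (0, 0) -> 0 < modulus z.
Proof.
  destruct z as [x y]; intros Hz. unfold modulus; simpl.
  apply sqrt_lt_R0.
  destruct (Req_dec x 0); destruct (Req_dec y 0); subst; try congruence; nra.
Qed.

Lemma modulus_polar (r a : R) : 0 <= r -> modulus (r * cos a, r * sin a) = r.
Proof.
  intros Hr. unfold modulus; cbn [fst snd].
  replace ((r * cos a) ^ 2 + (r * sin a) ^ 2) with (r * r).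
  - apply sqrt_square; auto.
  - pose proof (sin2_cos2 a) as E. unfold Rsqr in E. nra.
Qed.

Lemma normalize_polar (r a : R) :
  0 < r -> normalize (r * cos a, r * sin a) = (cos a, sin a).
Proof.
  intros Hr. unfold normalize. rewrite modulus_polar by lra. simpl.
  f_equal; field; lra.
Qed.

Lemma normalize_on_circle (z : pt) : z <> (0, 0) -> on_circle (normalize z).
Proof.
  intros Hz. pose proof (modulus_pos z Hz) as Hm.
  destruct z as [x y]. unfold normalize; simpl in *.
  apply unit_circle_polar.
  assert (E : modulus (x, y) * modulus (x, y) = x ^ 2 + y ^ 2).
  { unfold modulus; cbn [fst snd]. apply sqrt_sqrt. nra. }
  set (m := modulus (x, y)) in *. cbn [fst snd].
  replace ((x / m) ^ 2 + (y / m) ^ 2) with ((x ^ 2 + y ^ 2) / (m * m))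
    by (field; lra).
  rewrite <- E. field. lra.
Qed.

Lemma half_pow_pos (n : nat) : 0 < (/ 2) ^ n.
Proof. apply pow_lt; lra. Qed.

Lemma half_pow_sub (a b : nat) : (b <= a)%nat -> (/ 2) ^ a = (/ 2) ^ b * (/ 2) ^ (a - b).
Proof. intros H. rewrite <- pow_add. f_equal. lia. Qed.

Lemma half_pow_le_1 (k : nat) : (/ 2) ^ k <= 1.
Proof. induction k; simpl; [lra|]. pose proof (half_pow_pos k). nra. Qed.

Lemma half_pow_le (n m : nat) : (n <= m)%nat -> (/ 2) ^ m <= (/ 2) ^ n.
Proof.
  intros H. rewrite (half_pow_sub m n H).
  pose proof (half_pow_pos n). pose proof (half_pow_le_1 (m - n)). nra.
Qed.

Lemma half_pow_le_inv (a b : nat) : (/ 2) ^ a <= (/ 2) ^ b -> (b <= a)%nat.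
Proof.
  intros H. destruct (Nat.le_gt_cases b a) as [h|h]; [exact h|exfalso].
  pose proof (half_pow_le (S a) b h) as H'. simpl in H'.
  pose proof (half_pow_pos a). lra.
Qed.

Lemma half_pow_lt_inv (a b : nat) : (/ 2) ^ a < (/ 2) ^ b -> (b < a)%nat.
Proof.
  intros H. destruct (Nat.le_gt_cases a b) as [h|h]; [exfalso|exact h].
  pose proof (half_pow_le a b h). lra.
Qed.

Lemma nat_bounded_has_max (P : nat -> Prop) (B : nat) :
  P 0%nat -> (forall n, P n -> (n <= B)%nat) ->
  exists n, P n /\ forall m, P m -> (m <= n)%nat.
Proof.
  intros H0 HB. apply NNPP; intros Hno.
  assert (Hk : forall k, exists n, P n /\ (k <= n)%nat).
  { induction k as [|k [n [Hn Hkn]]]; [exists 0%nat; split; auto; lia|].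
    destruct (classic (exists m, P m /\ (n < m)%nat)) as [[m [Hm Hnm]]|Hc].
    - exists m; split; auto; lia.
    - exfalso; apply Hno; exists n; split; auto.
      intros m Hm. destruct (Nat.le_gt_cases m n); auto. exfalso; apply Hc; eauto. }
  destruct (Hk (S B)) as [n [Hn Hle]]. apply HB in Hn. lia.
Qed.

Lemma dyadic_scale (r : R) : 0 < r <= 1 -> exists n : nat, (/ 2) ^ S n < r <= (/ 2) ^ n.
Proof.
  intros Hr.
  destruct (pow_lt_1_zero (/ 2) ltac:(rewrite Rabs_pos_eq; lra) r ltac:(lra)) as [N HN].
  destruct (nat_bounded_has_max (fun n => r <= (/ 2) ^ n) N) as [n [Hn Hmax]].
  - simpl; lra.
  - intros n Hn. destruct (Nat.le_gt_cases N n) as [h|h]; [|lia].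
    specialize (HN n h). rewrite Rabs_pos_eq in HN by (apply Rlt_le, half_pow_pos). lra.
  - exists n. split; [|exact Hn].
    destruct (Rlt_or_le ((/ 2) ^ S n) r) as [h|h]; auto. apply Hmax in h. lia.
Qed.

Lemma ln_le (x y : R) : 0 < x -> x <= y -> ln x <= ln y.
Proof.
  intros Hx Hxy. destruct (Rle_lt_or_eq_dec _ _ Hxy) as [h|h].
  - left; apply ln_increasing; auto.
  - rewrite h; right; reflexivity.
Qed.

Lemma ln2_pos : 0 < ln 2.
Proof. rewrite <- ln_1. apply ln_increasing; lra. Qed.

Lemma log2_ge_pow (x : R) (k : nat) : 2 ^ k <= x -> INR k <= log2 x.
Proof.
  intros Hx. assert (H2k : 0 < 2 ^ k) by (apply pow_lt; lra).
  pose proof (ln_le _ _ H2k Hx) as Hln. rewrite ln_pow in Hln by lra.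
  unfold log2. pose proof ln2_pos.
  apply Rmult_le_reg_r with (ln 2); auto.
  unfold Rdiv. rewrite Rmult_assoc, Rinv_l by lra. lra.
Qed.

Lemma log2_ratio_ge (lP l m : R) (k : nat) :
  0 < m <= l -> l = lP * (/ 2) ^ k -> INR k <= log2 (lP / m).
Proof.
  intros Hm Hl. apply log2_ge_pow.
  assert (E : lP = l * 2 ^ k).
  { rewrite Hl, Rmult_assoc, <- Rpow_mult_distr.
    replace (/ 2 * 2) with 1 by field. rewrite pow1. ring. }
  assert (H2k : 0 < 2 ^ k) by (apply pow_lt; lra).
  apply Rmult_le_reg_r with m; [lra|].
  unfold Rdiv. rewrite Rmult_assoc, Rinv_l by lra. nra.
Qed.

Lemma log2_between_1_2 (x : R) : 1 <= x <= 2 -> 0 <= log2 x <= 1.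
Proof.
  intros Hx. unfold log2. pose proof ln2_pos.
  pose proof (ln_le 1 x ltac:(lra) ltac:(lra)) as H1. rewrite ln_1 in H1.
  pose proof (ln_le x 2 ltac:(lra) ltac:(lra)) as H2.
  split.
  - apply Rmult_le_pos; [lra | left; apply Rinv_0_lt_compat; lra].
  - apply Rmult_le_reg_r with (ln 2); auto.
    unfold Rdiv. rewrite Rmult_assoc, Rinv_l by lra. lra.
Qed.

Lemma in_T_mono (rho rho' : R) (J : arc) (z : pt) :
  rho <= rho' -> in_T rho J z -> in_T rho' J z.
Proof. intros Hr [H1 [H2 H3]]. split; auto. split; auto. lra. Qed.

Lemma in_T_same_len (rho : R) (J K : arc) (z : pt) :
  arc_sub J K -> arc_len J = arc_len K -> in_T rho J z -> in_T rho K z.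
Proof.
  intros Hs Hl [H1 [H2 H3]]. unfold in_T. rewrite <- Hl. split; auto. split; auto.
  destruct H3; auto.
Qed.

Lemma in_T_half_parent (J P : arc) (z : pt) : valid_arc J -> arc_sub J P ->
  arc_len P = 2 * arc_len J -> in_T (1/2) J z -> in_T (3/4) P z.
Proof.
  intros [V1 V2] Hs Hl [H1 [H2 H3]]. split; auto. split.
  - rewrite Hl.
    replace ((1 - modulus z) / (2 * arc_len J)) with (((1 - modulus z) / arc_len J) / 2)
      by (field; lra).
    lra.
  - destruct H3; auto.
Qed.

Lemma in_T_depth (rho : R) (I : arc) (z : pt) : 0 < arc_len I -> in_T rho I z ->
  (1 - rho) * arc_len I < 1 - modulus z <= arc_len I.
Proof.
  intros HI [_ [[H1 H2] _]].
  replace (1 - modulus z) with ((1 - modulus z) / arc_len I * arc_len I) by (field; lra).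
  split; nra.
Qed.

Definition top_point (J : arc) : pt :=
  ((1 - 3/4 * arc_len J) * cos (2 * PI * arc_start J),
   (1 - 3/4 * arc_len J) * sin (2 * PI * arc_start J)).

Lemma top_point_in_T (J : arc) : valid_arc J -> in_T (1/2) J (top_point J).
Proof.
  intros [H1 H2]. unfold in_T, top_point, in_disc.
  rewrite modulus_polar by lra. split; [lra|]. split.
  - replace ((1 - (1 - 3 / 4 * arc_len J)) / arc_len J) with (3/4) by (field; lra). lra.
  - right. rewrite normalize_polar by lra. apply arc_set_start. lra.
Qed.

Section DyadicGrid.

Variable D : arc -> Prop.
Hypothesis HD : dyadic_grid D.

Lemma grid_valid (I : arc) : D I -> valid_arc I.
Proof. destruct HD as (Hv & _). exact (Hv I). Qed.

Lemma grid_len_pow (I : arc) : D I -> exists n : nat, arc_len I = (/ 2) ^ n.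
Proof. destruct HD as (_ & _ & _ & _ & Hp). exact (Hp I). Qed.

Lemma grid_descend (K : arc) (n : nat) (w : pt) : D K -> arc_set K w ->
  exists J, D J /\ arc_len J = arc_len K * (/ 2) ^ n /\ arc_set J w /\ arc_sub J K.
Proof.
  intros HK. destruct HD as (_ & _ & _ & Hh & _).
  induction n as [|n IH]; intros Hw.
  - exists K. repeat split; auto; [simpl; ring | intros x; auto].
  - destruct (IH Hw) as [J [HJ [HlJ [HwJ HJK]]]].
    destruct (Hh J HJ) as [I1 [I2 [HI1 [HI2 [L1 [L2 Hiff]]]]]].
    destruct (proj1 (Hiff w) HwJ) as [h|h]; [exists I1 | exists I2];
      repeat split; auto; try (rewrite ?L1, ?L2, HlJ; simpl; field);
      intros x Hx; apply HJK, Hiff; auto.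
Qed.

Lemma grid_nested (J K : arc) (w : pt) : D J -> D K -> arc_len J <= arc_len K ->
  arc_set J w -> arc_set K w -> arc_sub J K.
Proof.
  intros HJ HK Hle HwJ HwK.
  destruct (grid_len_pow J HJ) as [a Ha]. destruct (grid_len_pow K HK) as [b Hb].
  assert (Hba : (b <= a)%nat) by (apply half_pow_le_inv; lra).
  destruct (grid_descend K (a - b) w HK HwK) as [J' [HJ' [Hl' [Hw' Hsub]]]].
  destruct HD as (_ & _ & Hp & _).
  assert (Heq : arc_eq J J').
  { apply (proj2 (Hp J HJ) J J'); auto.
    - rewrite Hl', Hb, Ha. symmetry. apply half_pow_sub. auto.
    - exists w; auto. }
  intros x Hx. apply Hsub, Heq, Hx.
Qed.

Lemma grid_level_cover (n : nat) (w : pt) : on_circle w ->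
  exists J, D J /\ arc_len J = (/ 2) ^ n /\ arc_set J w.
Proof.
  intros Hw. pose proof HD as (_ & [a HT] & Hp & _).
  destruct (grid_descend _ n (circ a) HT) as [J [HJ [Hl _]]].
  { apply arc_set_full. exists a; reflexivity. }
  destruct (proj1 (Hp J HJ) w Hw) as [J' [HJ' [Hl' Hw']]].
  exists J'. repeat split; auto. rewrite Hl', Hl. simpl. ring.
Qed.

Lemma Iz_spec (z : pt) : in_disc z -> D (Iz D z) /\ in_T (1/2) (Iz D z) z.
Proof.
  intros Hz. unfold Iz. apply (epsilon_spec arc_inhabited (fun I => D I /\ in_T (1/2) I z)).
  assert (Hm : 0 <= modulus z) by apply sqrt_pos. unfold in_disc in Hz.
  destruct (dyadic_scale (1 - modulus z) ltac:(lra)) as [n [Hn1 Hn2]].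
  simpl in Hn1.
  (* the direction of the origin is immaterial, so any point of T will do there *)
  assert (Hw : exists w, on_circle w /\ (z = (0, 0) \/ w = normalize z)).
  { destruct (classic (z = (0, 0))) as [h|h].
    - exists (circ 0). split; [exists 0; reflexivity | auto].
    - exists (normalize z). split; auto. apply normalize_on_circle; auto. }
  destruct Hw as [w [Hw Hwz]].
  destruct (grid_level_cover n w Hw) as [J [HJ [HlJ HwJ]]].
  pose proof (half_pow_pos n) as Hp.
  exists J. split; auto. split; [exact Hz|]. split.
  - rewrite HlJ. split.
    + apply Rmult_lt_reg_r with ((/ 2) ^ n); auto.
      unfold Rdiv. rewrite Rmult_assoc, Rinv_l by lra. lra.
    + apply Rmult_le_reg_r with ((/ 2) ^ n); auto.
      unfold Rdiv. rewrite Rmult_assoc, Rinv_l by lra. lra.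
  - destruct Hwz as [h|h]; [auto | right; subst w; auto].
Qed.

Lemma PD_spec (I J : arc) : D I -> D J ->
  D (PD D I J) /\ arc_sub I (PD D I J) /\ arc_sub J (PD D I J) /\
  forall Q, D Q -> arc_sub I Q -> arc_sub J Q -> arc_sub (PD D I J) Q.
Proof.
  intros HI HJ. unfold PD.
  apply (epsilon_spec arc_inhabited (fun P => D P /\ arc_sub I P /\ arc_sub J P /\
     forall Q, D Q -> arc_sub I Q -> arc_sub J Q -> arc_sub P Q)).
  destruct (grid_len_pow I HI) as [nI HnI].
  (* the smallest common ancestor is a common ancestor of maximal depth *)
  destruct (nat_bounded_has_max
    (fun n => exists K, D K /\ arc_len K = (/ 2) ^ n /\ arc_sub I K /\ arc_sub J K) nI)
    as [n [[K [HK [HlK [HIK HJK]]]] Hmax]].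
  - pose proof HD as (_ & [a HT] & _).
    exists (mkarc a 1). repeat split; auto; apply arc_sub_full; auto.
  - intros n [K [HK [HlK [HIK _]]]].
    apply half_pow_le_inv. rewrite <- HlK, <- HnI.
    apply arc_sub_len_le; auto. apply grid_valid; auto.
  - exists K. repeat split; auto.
    intros Q HQ HIQ HJQ.
    destruct (grid_len_pow Q HQ) as [q Hq].
    assert (Hqn : (q <= n)%nat) by (apply Hmax; exists Q; auto).
    destruct (grid_valid I HI) as [HI0 _].
    apply (grid_nested K Q (circ (arc_start I))); auto.
    + rewrite HlK, Hq. apply half_pow_le; auto.
    + apply HIK, arc_set_start; auto.
    + apply HIQ, arc_set_start; auto.
Qed.

Lemma Iz_sub_of_in_T34 (I : arc) (z : pt) : D I -> in_T (3/4) I z ->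
  arc_sub (Iz D z) I /\ arc_len I / 2 <= arc_len (Iz D z).
Proof.
  intros HI HzI.
  destruct (Iz_spec z (proj1 HzI)) as [HJ HzJ]. set (J := Iz D z) in *.
  destruct (grid_len_pow J HJ) as [a Ha]. destruct (grid_len_pow I HI) as [b Hb].
  destruct (grid_valid I HI) as [HI0 HI1]. destruct (grid_valid J HJ) as [HJ0 _].
  pose proof (in_T_depth _ _ _ HI0 HzI) as [R1 R2].
  pose proof (in_T_depth _ _ _ HJ0 HzJ) as [Q1 Q2].
  assert (ba : (b <= a)%nat).
  { apply Nat.lt_succ_r, half_pow_lt_inv. simpl. lra. }
  assert (ab : (a <= S b)%nat).
  { apply Nat.lt_succ_r, half_pow_lt_inv. simpl. lra. }
  assert (LJI : arc_len J <= arc_len I) by (rewrite Ha, Hb; apply half_pow_le; auto).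
  split.
  - destruct (classic (z = (0, 0))) as [h|h].
    + subst z. rewrite modulus_origin in R2. apply arc_sub_full. lra.
    + destruct HzI as [_ [_ [h'|HnI]]]; [congruence|].
      destruct HzJ as [_ [_ [h'|HnJ]]]; [congruence|].
      apply (grid_nested J I (normalize z)); auto.
  - rewrite Ha, Hb. pose proof (half_pow_le a (S b) ab). simpl in *. lra.
Qed.

Lemma betaD_le_1 (I : arc) (z zeta : pt) : D I -> in_T (3/4) I z -> in_T (3/4) I zeta ->
  0 <= betaD D z zeta <= 1.
Proof.
  intros HI Hz Hzeta.
  destruct (Iz_sub_of_in_T34 I z HI Hz) as [S1 M1].
  destruct (Iz_sub_of_in_T34 I zeta HI Hzeta) as [S2 M2].
  destruct (Iz_spec z (proj1 Hz)) as [HJ1 _].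
  destruct (Iz_spec zeta (proj1 Hzeta)) as [HJ2 _].
  destruct (PD_spec _ _ HJ1 HJ2) as [HP [P1 [_ Pmin]]].
  set (J1 := Iz D z) in *. set (J2 := Iz D zeta) in *. set (P := PD D J1 J2) in *.
  assert (PI : arc_len P <= arc_len I).
  { apply arc_sub_len_le; [apply grid_valid | apply Pmin]; auto. }
  assert (JP : arc_len J1 <= arc_len P) by (apply arc_sub_len_le; auto; apply grid_valid; auto).
  destruct (grid_valid I HI) as [VI _].
  set (m := Rmin (arc_len J1) (arc_len J2)).
  assert (mJ : m <= arc_len J1) by apply Rmin_l.
  assert (mI : arc_len I / 2 <= m) by (apply Rmin_glb; auto).
  unfold betaD. fold J1 J2 P m. apply log2_between_1_2.
  split.
  - apply Rmult_le_reg_r with m; [lra|].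
    unfold Rdiv. rewrite Rmult_assoc, Rinv_l by lra. lra.
  - apply Rmult_le_reg_r with m; [lra|].
    unfold Rdiv. rewrite Rmult_assoc, Rinv_l by lra. lra.
Qed.

Lemma betaD_depth (z zeta : pt) : in_disc z -> in_disc zeta ->
  exists P (m k : nat), D P /\
    arc_sub (Iz D z) P /\ arc_len (Iz D z) = arc_len P * (/ 2) ^ m /\
    arc_sub (Iz D zeta) P /\ arc_len (Iz D zeta) = arc_len P * (/ 2) ^ k /\
    INR m <= betaD D z zeta /\ INR k <= betaD D z zeta.
Proof.
  intros Hz Hzeta.
  destruct (Iz_spec z Hz) as [HI1 _]. destruct (Iz_spec zeta Hzeta) as [HI2 _].
  destruct (PD_spec _ _ HI1 HI2) as [HP [S1 [S2 _]]].
  set (I1 := Iz D z) in *. set (I2 := Iz D zeta) in *. set (P := PD D I1 I2) in *.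
  destruct (grid_len_pow I1 HI1) as [a Ha].
  destruct (grid_len_pow I2 HI2) as [b Hb].
  destruct (grid_len_pow P HP) as [p Hp].
  assert (pa : (p <= a)%nat).
  { apply half_pow_le_inv. rewrite <- Ha, <- Hp. apply arc_sub_len_le; auto. apply grid_valid; auto. }
  assert (pb : (p <= b)%nat).
  { apply half_pow_le_inv. rewrite <- Hb, <- Hp. apply arc_sub_len_le; auto. apply grid_valid; auto. }
  assert (E1 : arc_len I1 = arc_len P * (/ 2) ^ (a - p)) by (rewrite Ha, Hp; apply half_pow_sub; auto).
  assert (E2 : arc_len I2 = arc_len P * (/ 2) ^ (b - p)) by (rewrite Hb, Hp; apply half_pow_sub; auto).
  assert (Hmin1 : Rmin (arc_len I1) (arc_len I2) <= arc_len I1) by apply Rmin_l.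
  assert (Hmin2 : Rmin (arc_len I1) (arc_len I2) <= arc_len I2) by apply Rmin_r.
  assert (Hmin : 0 < Rmin (arc_len I1) (arc_len I2)).
  { apply Rmin_glb_lt; [rewrite Ha | rewrite Hb]; apply half_pow_pos. }
  exists P, (a - p)%nat, (b - p)%nat. unfold betaD. fold I1 I2 P.
  repeat split; auto.
  - apply (log2_ratio_ge _ (arc_len I1)); auto.
  - apply (log2_ratio_ge _ (arc_len I2)); auto.
Qed.

End DyadicGrid.

Definition almost_constant_on_top_halves (D : arc -> Prop) (f : pt -> R) (C : R) : Prop :=
  forall I, D I -> forall z zeta, in_T (3/4) I z -> in_T (3/4) I zeta -> f z <= C * f zeta.

Section AlmostConstant.

Variables (D : arc -> Prop) (f : pt -> R) (C : R).
Hypothesis HD : dyadic_grid D.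
Hypothesis Hf : forall z, in_disc z -> 0 < f z.
Hypothesis HfC : almost_constant_on_top_halves D f C.

Lemma ln_dist_le_on_top_half (I : arc) (z w : pt) :
  D I -> in_T (3/4) I z -> in_T (3/4) I w -> Rabs (ln (f z) - ln (f w)) <= ln C.
Proof.
  intros HI Hz Hw.
  assert (one_side : forall a b, in_T (3/4) I a -> in_T (3/4) I b -> ln (f a) - ln (f b) <= ln C).
  { intros a b Ha Hb. pose proof (Hf a (proj1 Ha)). pose proof (Hf b (proj1 Hb)).
    pose proof (HfC I HI a b Ha Hb) as Hab.
    assert (0 < C) by nra.
    pose proof (ln_le (f a) _ ltac:(lra) Hab) as Hln. rewrite ln_mult in Hln by lra. lra. }
  apply Rabs_le. pose proof (one_side z w Hz Hw). pose proof (one_side w z Hw Hz). lra.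
Qed.

Lemma ln_dist_le_along_descent (n : nat) (K J : arc) (z w : pt) :
  D K -> D J -> arc_sub J K -> arc_len J = arc_len K * (/ 2) ^ n ->
  in_T (1/2) J z -> in_T (1/2) K w -> Rabs (ln (f z) - ln (f w)) <= INR (S n) * ln C.
Proof.
  revert J z. induction n as [|n IH]; intros J z HK HJ HJK Hl Hz Hw.
  - simpl in Hl. rewrite Rmult_1_r in Hl. simpl. rewrite Rmult_1_l.
    apply (ln_dist_le_on_top_half K); auto; apply (in_T_mono (1/2)); try lra; auto.
    eapply in_T_same_len; eauto.
  - pose proof (grid_valid D HD J HJ) as VJ.
    pose proof (arc_set_start J (proj1 VJ)) as Hw0.
    destruct (grid_descend D HD K n _ HK (HJK _ Hw0)) as [J' [HJ' [Hl' [Hw' HJ'K]]]].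
    assert (Hl2 : arc_len J' = 2 * arc_len J) by (rewrite Hl, Hl'; simpl; field).
    assert (HJJ' : arc_sub J J').
    { apply (grid_nested D HD J J' (circ (arc_start J))); auto. destruct VJ; lra. }
    pose proof (top_point_in_T J' (grid_valid D HD J' HJ')) as Hz'.
    pose proof (IH J' (top_point J') HK HJ' HJ'K Hl' Hz' Hw) as IHw.
    assert (Hstep : Rabs (ln (f z) - ln (f (top_point J'))) <= ln C).
    { apply (ln_dist_le_on_top_half J'); auto.
      - apply (in_T_half_parent J); auto.
      - apply (in_T_mono (1/2)); auto; lra. }
    replace (ln (f z) - ln (f w))
      with ((ln (f z) - ln (f (top_point J'))) + (ln (f (top_point J')) - ln (f w))) by ring.
    eapply Rle_trans; [apply Rabs_triang|]. rewrite (S_INR (S n)). lra.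
Qed.

Lemma ln_dist_le_betaD (z zeta : pt) : 1 <= C -> in_disc z -> in_disc zeta ->
  Rabs (ln (f z) - ln (f zeta)) <= 2 * ln C * (1 + betaD D z zeta).
Proof.
  intros HC Hz Hzeta.
  assert (HlnC : 0 <= ln C) by (rewrite <- ln_1; apply ln_le; lra).
  destruct (betaD_depth D HD z zeta Hz Hzeta) as [P [m [k [HP [S1 [E1 [S2 [E2 [Bm Bk]]]]]]]]].
  destruct (Iz_spec D HD z Hz) as [HI1 Hz1].
  destruct (Iz_spec D HD zeta Hzeta) as [HI2 Hz2].
  pose proof (top_point_in_T P (grid_valid D HD P HP)) as HwP.
  pose proof (ln_dist_le_along_descent m _ _ _ _ HP HI1 S1 E1 Hz1 HwP) as C1.
  pose proof (ln_dist_le_along_descent k _ _ _ _ HP HI2 S2 E2 Hz2 HwP) as C2.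
  rewrite S_INR in C1, C2.
  replace (ln (f z) - ln (f zeta))
    with ((ln (f z) - ln (f (top_point P))) - (ln (f zeta) - ln (f (top_point P)))) by ring.
  eapply Rle_trans; [apply Rabs_triang|]. rewrite Rabs_Ropp. nra.
Qed.

End AlmostConstant.

Lemma almost_constant_of_ln_lipschitz (D : arc -> Prop) (f : pt -> R) (L : R) :
  dyadic_grid D -> (forall z, in_disc z -> 0 < f z) ->
  (forall z zeta, in_disc z -> in_disc zeta ->
     Rabs (ln (f z) - ln (f zeta)) <= L * (1 + betaD D z zeta)) ->
  almost_constant_on_top_halves D f (exp (2 * Rabs L)).
Proof.
  intros HD Hf HL I HI z zeta Hz Hzeta.
  pose proof (betaD_le_1 D HD I z zeta HI Hz Hzeta) as Hb.
  pose proof (HL z zeta (proj1 Hz) (proj1 Hzeta)) as HLz.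
  pose proof (Hf z (proj1 Hz)). pose proof (Hf zeta (proj1 Hzeta)).
  assert (Hle : ln (f z) <= 2 * Rabs L + ln (f zeta)).
  { pose proof (Rle_abs (ln (f z) - ln (f zeta))). pose proof (Rle_abs L).
    pose proof (Rabs_pos L). nra. }
  rewrite <- (exp_ln (f z)), <- (exp_ln (f zeta)), <- exp_plus by auto.
  destruct (Rle_lt_or_eq_dec _ _ Hle) as [h|h].
  - left. apply exp_increasing. exact h.
  - rewrite h. right. reflexivity.
Qed.

Theorem mainTheorem7 (D : arc -> Prop) (f : pt -> R) :
  dyadic_grid D ->
  (forall z, in_disc z -> 0 < f z) ->
  ((exists C, 1 <= C /\
      forall I, D I -> forall z zeta, in_T (3/4) I z -> in_T (3/4) I zeta ->
        f z <= C * f zeta)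
   <->
   (exists L, forall z zeta, in_disc z -> in_disc zeta ->
      Rabs (ln (f z) - ln (f zeta)) <= L * (1 + betaD D z zeta))).
Proof.
  intros HD Hf. split.
  - intros [C [HC HfC]]. exists (2 * ln C). intros z zeta Hz Hzeta.
    exact (ln_dist_le_betaD D f C HD Hf HfC z zeta HC Hz Hzeta).
  - intros [L HL]. exists (exp (2 * Rabs L)). split.
    + pose proof (exp_ineq1_le (2 * Rabs L)). pose proof (Rabs_pos L). lra.
    + exact (almost_constant_of_ln_lipschitz D f L HD Hf HL).
Qed.
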